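(* Let $D$ be an oriented graph and let $u$ be a vertex of $D$ of maximum score. Then every vertex $v \neq u$ of $D$ is weakly reachable within two steps from $u$.
   Context: An oriented graph is a digraph with no loops and no pair of symmetric arcs. For vertices $u,v$ write $u(1\text{-}0)v$ if there is an arc from $u$ to $v$, $u(0\text{-}1)v$ if there is an arc from $v$ to $u$, and $u(0\text{-}0)v$ if there is no arc between $u$ and $v$. If $D$ has $n$ vertices, the score of a vertex $v$ is $s(v) = n-1+d^+(v)-d^-(v)$, where $d^+(v), d^-(v)$ are the out- and indegree of $v$; equivalently $s(v)=2d^+(v)+d^*(v)$ where $d^*(v)$ is the number of vertices $w$ with $v(0\text{-}0)w$. A vertex $v$ is weakly reachable within two steps from $u$ if $u(1\text{-}0)v$, or $u(0\text{-}0)v$, or for some vertex $w$ one has $u(1\text{-}0)w(1\text{-}0)v$, or $u(1\text{-}0)w(0\text{-}0)v$, or $u(0\text{-}0)w(1\text{-}0)v$. *)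

From mathcomp Require Import all_boot.
Set Implicit Arguments. Unset Strict Implicit. Unset Printing Implicit Defensive.

Definition oriented (T : finType) (a : rel T) : Prop :=
  (forall v, ~~ a v v) /\ (forall u v, a u v -> ~~ a v u).

Definition nonadj (T : finType) (a : rel T) (u v : T) : bool :=
  [&& u != v, ~~ a u v & ~~ a v u].

Definition outdeg (T : finType) (a : rel T) (v : T) : nat := #|[set w | a v w]|.
Definition indeg (T : finType) (a : rel T) (v : T) : nat := #|[set w | a w v]|.

(* score s(v) = n - 1 + d^+(v) - d^-(v), computed in int to avoid truncation
   (it is always a nonnegative integer). *)
From mathcomp Require Import all_order all_algebra.
Definition score (T : finType) (a : rel T) (v : T) : int :=
  (#|T|.-1)%:Z + (outdeg a v)%:Z - (indeg a v)%:Z.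

Definition weakly_reach2 (T : finType) (a : rel T) (u v : T) : Prop :=
  a u v \/ nonadj a u v \/
  exists w, [|| a u w && a w v, a u w && nonadj a w v | nonadj a u w && a w v].

(* Suppose v <> u is not weakly reachable within two steps from u.  Then
   v -> u, every out-neighbour of u is an out-neighbour of v, and every
   in-neighbour of v is an in-neighbour of u, while v itself is an
   in-neighbour of u but not of v.  Hence d^+(u) <= d^+(v) and
   d^-(v) < d^-(u), so s(v) > s(u), contradicting the maximality of s(u). *)
From mathcomp Require Import all_boot all_order all_algebra.
From mathcomp Require Import zify.
Import Order.TTheory GRing.Theory Num.Theory.

Set Implicit Arguments.
Unset Strict Implicit.
Unset Printing Implicit Defensive.

Definition weakly_reach2b (T : finType) (a : rel T) (u v : T) : bool :=
  [|| a u v, nonadj a u v |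
      [exists w, [|| a u w && a w v, a u w && nonadj a w v | nonadj a u w && a w v]]].

Lemma weakly_reach2P (T : finType) (a : rel T) (u v : T) :
  reflect (weakly_reach2 a u v) (weakly_reach2b a u v).
Proof.
apply: (iffP or3P) => [[|| /existsP] | [| [| /existsP]]] reach.
- by left.
- by right; left.
- by right; right.
- exact: Or31.
- exact: Or32.
- exact: Or33.
Qed.

Lemma score_lt_of_neighbourhoods (T : finType) (a : rel T) (x y : T) :
  [set w | a x w] \subset [set w | a y w] ->
  [set w | a w y] \proper [set w | a w x] ->
  (score a x < score a y)%R.
Proof.
move=> /subset_leq_card out_le /proper_card in_lt.
rewrite /score /outdeg /indeg; lia.
Qed.

Section Unreachable.

Variables (T : finType) (a : rel T) (u v : T).
Hypothesis a_oriented : oriented a.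
Hypothesis v_neq_u : v != u.
Hypothesis unreachable : ~~ weakly_reach2b a u v.

Let a_irr : forall x, ~~ a x x := a_oriented.1.
Let a_asym : forall x y, a x y -> ~~ a y x := a_oriented.2.

Lemma unreachable_not_arc : ~~ a u v.
Proof. by move: unreachable; rewrite negb_or => /andP[]. Qed.

Lemma unreachable_arc : a v u.
Proof.
move: unreachable; rewrite /weakly_reach2b /nonadj eq_sym v_neq_u.
by case: (a u v); case: (a v u).
Qed.

Lemma unreachable_no_path2 w :
  ~~ [|| a u w && a w v, a u w && nonadj a w v | nonadj a u w && a w v].
Proof.
apply: contra unreachable => path_uwv.
by apply/or3P/Or33/existsP; exists w.
Qed.

Lemma unreachable_out_subset : [set w | a u w] \subset [set w | a v w].
Proof.
apply/subsetP => w; rewrite !inE => a_uw.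
have := unreachable_no_path2 w; rewrite a_uw /= /nonadj.
case: (a v w) => //; case: (a w v) => //=.
rewrite andbT andbF orbF => /negPn/eqP w_eq_v.
by move: unreachable_not_arc; rewrite -w_eq_v a_uw.
Qed.

Lemma unreachable_in_proper : [set w | a w v] \proper [set w | a w u].
Proof.
apply/properP; split; last by exists v; rewrite !inE ?unreachable_arc ?a_irr.
apply/subsetP => w; rewrite !inE => a_wv.
have not_a_uw : ~~ a u w.
  apply: contraL a_wv => a_uw; apply: a_asym.
  by move/subsetP: unreachable_out_subset => /(_ w); rewrite !inE; apply.
have := unreachable_no_path2 w; rewrite a_wv /= /nonadj !andbT (negbTE not_a_uw) /=.
case: (a w u) => //=; rewrite andbT => /negPn/eqP u_eq_w.
by move: unreachable_not_arc; rewrite u_eq_w a_wv.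
Qed.

End Unreachable.

Theorem theorem4 (T : finType) (a : rel T) (u : T) :
  oriented a ->
  (forall x : T, (score a x <= score a u)%R) ->
  forall v : T, v != u -> weakly_reach2 a u v.
Proof.
move=> a_oriented u_max v v_neq_u; apply/weakly_reach2P; apply: contraT => unreachable.
have := score_lt_of_neighbourhoods (unreachable_out_subset unreachable)
  (unreachable_in_proper a_oriented v_neq_u unreachable).
by rewrite ltNge u_max.
Qed.
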